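(* Let $\mathbb{K}\in\{\mathbb{R},\mathbb{C}\}$, $\mathbf{R}_U\in\mathbb{K}^{n\times n}$ self-adjoint positive definite, $U:=\mathbb{K}^n$ with $\langle\mathbf{x},\mathbf{y}\rangle_U:=\langle\mathbf{R}_U\mathbf{x},\mathbf{y}\rangle$ and norm $\|\cdot\|_U$. Fix $\mu$, $\mathbf{A}(\mu)\in\mathbb{K}^{n\times n}$, $\mathbf{u}(\mu)\in U$, a subspace $U_r\subseteq U$ of dimension $r$ with basis matrix $\mathbf{U}_r\in\mathbb{K}^{n\times r}$, and $\mathbf{\Theta}\in\mathbb{K}^{k\times n}$. Define $\|\mathbf{y}\|_{U_r'}^{\mathbf{\Theta}}:=\max_{\mathbf{x}\in U_r\setminus\{\mathbf{0}\}}|\langle\mathbf{\Theta}\mathbf{R}_U^{-1}\mathbf{y},\mathbf{\Theta}\mathbf{x}\rangle|/\|\mathbf{\Theta}\mathbf{x}\|$, $\alpha_r^{\mathbf{\Theta}}(\mu):=\min_{\mathbf{x}\in U_r\setminus\{\mathbf{0}\}}\|\mathbf{A}(\mu)\mathbf{x}\|_{U_r'}^{\mathbf{\Theta}}/\|\mathbf{x}\|_U$ and $\beta_r^{\mathbf{\Theta}}(\mu):=\max_{\mathbf{x}\in(\mathrm{span}\{\mathbf{u}(\mu)\}+U_r)\setminus\{\mathbf{0}\}}\|\mathbf{A}(\mu)\mathbf{x}\|_{U_r'}^{\mathbf{\Theta}}/\|\mathbf{x}\|_U$. Suppose that for some $\varepsilon\in[0,1)$, $|\langle\mathbf{x},\mathbf{y}\rangle_U-\langle\mathbf{\Theta}\mathbf{x},\mathbf{\Theta}\mathbf{y}\rangle|\le\varepsilon\|\mathbf{x}\|_U\|\mathbf{y}\|_U$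 for all $\mathbf{x},\mathbf{y}\in U_r$, and that $\mathbf{U}_r$ is orthogonal with respect to $\langle\mathbf{x},\mathbf{y}\rangle_U^{\mathbf{\Theta}}:=\langle\mathbf{\Theta}\mathbf{x},\mathbf{\Theta}\mathbf{y}\rangle$, i.e., $(\mathbf{\Theta}\mathbf{U}_r)^{\mathrm{H}}\mathbf{\Theta}\mathbf{U}_r=\mathbf{I}$. Then the condition number of $\mathbf{A}_r(\mu):=\mathbf{U}_r^{\mathrm{H}}\mathbf{\Theta}^{\mathrm{H}}\mathbf{\Theta}\mathbf{R}_U^{-1}\mathbf{A}(\mu)\mathbf{U}_r\in\mathbb{K}^{r\times r}$ is bounded by $\sqrt{\frac{1+\varepsilon}{1-\varepsilon}}\,\frac{\beta_r^{\mathbf{\Theta}}(\mu)}{\alpha_r^{\mathbf{\Theta}}(\mu)}$.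
   Context: $\langle\mathbf{x},\mathbf{y}\rangle=\mathbf{x}^{\mathrm{H}}\mathbf{y}$ is the canonical inner product and $\|\cdot\|$ the Euclidean norm. The condition number of a square matrix is the ratio of its largest to smallest singular value. *)

From HB Require Import structures.
From mathcomp Require Import all_boot all_order all_algebra.
Set Implicit Arguments. Unset Strict Implicit. Unset Printing Implicit Defensive.
Import Order.TTheory GRing.Theory Num.Theory.
Local Open Scope ring_scope.

Section Prop43.
(* K is the scalar field, [cj] its conjugation (identity over the reals),
   [sq] its square root on nonnegative reals. *)
Variables (K : numFieldType) (cj : K -> K) (sq : K -> K).

Definition adj (m p : nat) (M : 'M[K]_(m, p)) : 'M[K]_(p, m) := map_mx cj M^T.

Definition dot (m : nat) (x y : 'cV[K]_m) : K := \sum_i cj (x i 0) * y i 0.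

Definition enorm (m : nat) (x : 'cV[K]_m) : K := sq (dot x x).

Definition is_max (P : K -> Prop) (m : K) : Prop := P m /\ forall v, P v -> v <= m.
Definition is_min (P : K -> Prop) (m : K) : Prop := P m /\ forall v, P v -> m <= v.

Definition singval (p q : nat) (M : 'M[K]_(p, q)) (s : K) : Prop :=
  0 <= s /\ eigenvalue (adj M *m M) (s ^+ 2).

Definition is_cond (p : nat) (M : 'M[K]_p) (c : K) : Prop :=
  exists smax smin, is_max (singval M) smax /\ is_min (singval M) smin /\
    c = smax / smin.

Variables (n r k : nat) (RU : 'M[K]_n) (Ur : 'M[K]_(n, r)) (Th : 'M[K]_(k, n)).

Definition dotU (x y : 'cV[K]_n) : K := dot (RU *m x) y.
Definition normU (x : 'cV[K]_n) : K := sq (dotU x x).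

Definition inUr (x : 'cV[K]_n) : Prop := exists a : 'cV[K]_r, x = Ur *m a.

Definition is_dualnormTh (y : 'cV[K]_n) (d : K) : Prop :=
  is_max (fun v => exists x, inUr x /\ x != 0 /\
     v = `|dot (Th *m (invmx RU *m y)) (Th *m x)| / enorm (Th *m x)) d.

Definition is_alphaTh (A : 'M[K]_n) (al : K) : Prop :=
  is_min (fun v => exists x, inUr x /\ x != 0 /\
     exists d, is_dualnormTh (A *m x) d /\ v = d / normU x) al.

Definition is_betaTh (A : 'M[K]_n) (u : 'cV[K]_n) (be : K) : Prop :=
  is_max (fun v => exists (c : K) x, inUr x /\ c *: u + x != 0 /\
     exists d, is_dualnormTh (A *m (c *: u + x)) d /\ v = d / normU (c *: u + x)) be.

Definition Ar (A : 'M[K]_n) : 'M[K]_r :=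
  adj Ur *m adj Th *m Th *m invmx RU *m A *m Ur.

End Prop43.

Definition prop43_stmt (K : numFieldType) (cj : K -> K) (sq : K -> K) : Prop :=
  forall (n r k : nat) (RU : 'M[K]_n) (A : 'M[K]_n) (u : 'cV[K]_n)
         (Ur : 'M[K]_(n, r)) (Th : 'M[K]_(k, n)) (eps : K),
    adj cj RU = RU ->
    (forall x : 'cV[K]_n, x != 0 -> 0 < dot cj x (RU *m x)) ->
    \rank Ur = r ->
    0 <= eps < 1 ->
    (forall x y, inUr Ur x -> inUr Ur y ->
       `|dotU cj RU x y - dot cj (Th *m x) (Th *m y)|
         <= eps * normU cj sq RU x * normU cj sq RU y) ->
    adj cj (Th *m Ur) *m (Th *m Ur) = 1%:M ->
    forall (al be kappa : K),
      is_alphaTh cj sq RU Ur Th A al ->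
      is_betaTh cj sq RU Ur Th A u be ->
      is_cond cj (Ar cj RU Ur Th A) kappa ->
      kappa <= sq ((1 + eps) / (1 - eps)) * (be / al).

From mathcomp Require Import all_boot all_order all_algebra.
From mathcomp Require Import ring.
Import Order.TTheory GRing.Theory Num.Theory.
Set Implicit Arguments. Unset Strict Implicit. Unset Printing Implicit Defensive.
Local Open Scope ring_scope.

(* Since Theta U_r is orthonormal, the sketched dual norm of y is the Euclidean
   norm of the coordinate vector (Theta U_r)^H Theta R_U^-1 y: Cauchy-Schwarz
   bounds every quotient and equality holds at the Theta-projection onto U_r.
   In particular the dual norm of A U_r a is ||A_r a||.  The epsilon-embedding
   gives (1 - eps) ||U_r a||_U^2 <= ||a||^2 <= (1 + eps) ||U_r a||_U^2.
   Testing alpha and beta on U_r w, for w a right singular vector of A_r with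
   singular value s, yields alpha^2 <= (1 + eps) s^2 and (1 - eps) s^2 <= beta^2;
   it remains to apply this to the extreme singular values. *)

Lemma is_max_unique (K : numFieldType) (P : K -> Prop) m m' :
  is_max P m -> is_max P m' -> m = m'.
Proof. by move=> [Pm maxm] [Pm' maxm']; apply/le_anti; rewrite maxm' ?maxm. Qed.

Section Hermitian.
Variables (K : numFieldType) (cj : {rmorphism K -> K}).
Hypothesis cjK : involutive cj.
Hypothesis mul_cj_self : forall x, cj x * x = `|x| ^+ 2.

Lemma dotE m (x y : 'cV[K]_m) : dot cj x y = (adj cj x *m y) 0 0.
Proof. by rewrite mxE; apply: eq_bigr => i _; rewrite !mxE. Qed.

Lemma adjM m p q (A : 'M[K]_(m, p)) (B : 'M_(p, q)) :
  adj cj (A *m B) = adj cj B *m adj cj A.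
Proof. by rewrite /adj trmx_mul map_mxM. Qed.

Lemma adjK m p : cancel (@adj K cj m p) (@adj K cj p m).
Proof. by move=> A; apply/matrixP => i j; rewrite !mxE cjK. Qed.

Lemma dot_adjl m p (M : 'M[K]_(m, p)) x y :
  dot cj (M *m x) y = dot cj x (adj cj M *m y).
Proof. by rewrite !dotE adjM mulmxA. Qed.

Lemma dot_adjr m p (M : 'M[K]_(m, p)) x y :
  dot cj x (M *m y) = dot cj (adj cj M *m x) y.
Proof. by rewrite dot_adjl adjK. Qed.

Lemma dotDl m (x y z : 'cV[K]_m) : dot cj (x + y) z = dot cj x z + dot cj y z.
Proof. by rewrite /dot -big_split; apply: eq_bigr => i _; rewrite !mxE rmorphD mulrDl. Qed.

Lemma dotDr m (x y z : 'cV[K]_m) : dot cj x (y + z) = dot cj x y + dot cj x z.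
Proof. by rewrite !dotE mulmxDr mxE. Qed.

Lemma dotZl m a (x y : 'cV[K]_m) : dot cj (a *: x) y = cj a * dot cj x y.
Proof. by rewrite /dot mulr_sumr; apply: eq_bigr => i _; rewrite !mxE rmorphM mulrA. Qed.

Lemma dotZr m a (x y : 'cV[K]_m) : dot cj x (a *: y) = a * dot cj x y.
Proof. by rewrite /dot mulr_sumr; apply: eq_bigr => i _; rewrite !mxE mulrCA. Qed.

Lemma dotNl m (x y : 'cV[K]_m) : dot cj (- x) y = - dot cj x y.
Proof. by rewrite -scaleN1r dotZl rmorphN1 mulN1r. Qed.

Lemma dotNr m (x y : 'cV[K]_m) : dot cj x (- y) = - dot cj x y.
Proof. by rewrite -scaleN1r dotZr mulN1r. Qed.

Lemma dotC m (x y : 'cV[K]_m) : dot cj y x = cj (dot cj x y).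
Proof. by rewrite /dot rmorph_sum; apply: eq_bigr => i _; rewrite rmorphM cjK mulrC. Qed.

Lemma dot0l m (x : 'cV[K]_m) : dot cj 0 x = 0.
Proof. by rewrite -(scale0r 0) dotZl rmorph0 mul0r. Qed.

Lemma dotxxE m (x : 'cV[K]_m) : dot cj x x = \sum_i `|x i 0| ^+ 2.
Proof. by apply: eq_bigr => i _; rewrite mul_cj_self. Qed.

Lemma dotxx_ge0 m (x : 'cV[K]_m) : 0 <= dot cj x x.
Proof. by rewrite dotxxE sumr_ge0 // => i _; rewrite exprn_ge0. Qed.

Lemma dotxx_eq0 m (x : 'cV[K]_m) : (dot cj x x == 0) = (x == 0).
Proof.
apply/idP/eqP => [|->]; last by rewrite dot0l.
rewrite dotxxE => /eqP/psumr_eq0P x0; apply/matrixP => i j; rewrite (ord1 j) mxE.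
by apply/eqP; rewrite -normr_eq0 -sqrf_eq0 x0 // => l _; apply: exprn_ge0.
Qed.

Lemma dotxx_gt0 m (x : 'cV[K]_m) : x != 0 -> 0 < dot cj x x.
Proof. by move=> nz_x; rewrite lt_def dotxx_eq0 nz_x dotxx_ge0. Qed.

Lemma cauchy_schwarz m (x y : 'cV[K]_m) :
  `|dot cj x y| ^+ 2 <= dot cj x x * dot cj y y.
Proof.
have [->|nz_x] := eqVneq x 0; first by rewrite !dot0l normr0 expr0n mul0r.
set N := dot cj x x; set p := dot cj x y.
have N_gt0 : 0 < N := dotxx_gt0 nz_x.
have cjN : cj N = N by rewrite /N -dotC.
have := dotxx_ge0 (y - (p / N) *: x).
have -> : dot cj (y - (p / N) *: x) (y - (p / N) *: x) = dot cj y y - `|p| ^+ 2 / N.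
  rewrite dotDl !dotDr !dotNl !dotNr !dotZl !dotZr (dotC x y) -/p -/N.
  by rewrite rmorphM fmorphV cjN -mul_cj_self; field; rewrite gt_eqF.
by rewrite subr_ge0 ler_pdivrMr // mulrC.
Qed.

Lemma eigenvalue_tr n (g : 'M[K]_n) a : eigenvalue g^T a = eigenvalue g a.
Proof.
rewrite /eigenvalue /eigenspace !kermx_eq0 !row_free_unit -unitmx_tr.
by rewrite linearB /= trmxK tr_scalar_mx.
Qed.

Lemma eigenvalue_colP n (g : 'M[K]_n) a :
  reflect (exists2 w : 'cV_n, g *m w = a *: w & w != 0) (eigenvalue g a).
Proof.
rewrite -eigenvalue_tr; apply: (iffP eigenvalueP) => -[v gv nz_v].
  by exists v^T; rewrite -?trmx_mul ?trmx_eq0 // -[g]trmxK -trmx_mul gv linearZ.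
by exists v^T; rewrite ?trmx_eq0 // -trmx_mul gv linearZ.
Qed.

Lemma singval_vec p q (M : 'M[K]_(p, q)) s : singval cj M s ->
  exists2 w : 'cV_q, dot cj (M *m w) (M *m w) = s ^+ 2 * dot cj w w & w != 0.
Proof.
case=> _ /eigenvalue_colP[w Mw nz_w]; exists w => //.
by rewrite dot_adjl mulmxA Mw dotZr.
Qed.

Lemma singval0 p q (M : 'M[K]_(p, q)) (w : 'cV_q) :
  M *m w = 0 -> w != 0 -> singval cj M 0.
Proof.
move=> Mw nz_w; split=> //; apply/eigenvalue_colP; exists w => //.
by rewrite -mulmxA Mw mulmx0 expr0n scale0r.
Qed.

Lemma cV_neq0_dim_gt0 m (a : 'cV[K]_m) : a != 0 -> (0 < m)%N.
Proof. by case: m a => // a; rewrite flatmx0 eqxx. Qed.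

Section Norms.
Variable sq : K -> K.
Hypothesis sq_ge0 : forall x : K, 0 <= x -> 0 <= sq x.
Hypothesis sqK : forall x : K, 0 <= x -> sq x ^+ 2 = x.

Lemma sq_gt0 x : 0 < x -> 0 < sq x.
Proof.
move=> x_gt0; have x_ge0 := ltW x_gt0.
rewrite lt_def sq_ge0 // andbT; apply: contraTneq x_gt0 => sq0.
by rewrite -(sqK x_ge0) sq0 expr0n ltxx.
Qed.

Lemma enorm_ge0 m (x : 'cV[K]_m) : 0 <= enorm cj sq x.
Proof. exact/sq_ge0/dotxx_ge0. Qed.

Lemma enormK m (x : 'cV[K]_m) : enorm cj sq x ^+ 2 = dot cj x x.
Proof. exact/sqK/dotxx_ge0. Qed.

Lemma enorm_eq0 m (x : 'cV[K]_m) : (enorm cj sq x == 0) = (x == 0).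
Proof. by rewrite -dotxx_eq0 -enormK sqrf_eq0. Qed.

Lemma enorm_gt0 m (x : 'cV[K]_m) : x != 0 -> 0 < enorm cj sq x.
Proof. by move=> nz_x; rewrite lt_def enorm_eq0 nz_x enorm_ge0. Qed.

Lemma ratio_le_of_sq_bounds eps al be smin smax :
  0 <= eps < 1 -> 0 < al -> 0 <= be -> 0 < smin -> 0 <= smax ->
  al ^+ 2 <= (1 + eps) * smin ^+ 2 -> (1 - eps) * smax ^+ 2 <= be ^+ 2 ->
  smax / smin <= sq ((1 + eps) / (1 - eps)) * (be / al).
Proof.
move=> /andP[eps_ge0 eps_lt1] al_gt0 be_ge0 smin_gt0 smax_ge0 al_le be_ge.
have eps'_gt0 : 0 < 1 - eps by rewrite subr_gt0.
have q_ge0 := divr_ge0 (addr_ge0 ler01 eps_ge0) (ltW eps'_gt0).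
suff : (smax / smin) ^+ 2 <= (sq ((1 + eps) / (1 - eps)) * (be / al)) ^+ 2.
  have lhs_ge0 : 0 <= smax / smin by rewrite divr_ge0 // ltW.
  have rhs_ge0 : 0 <= sq ((1 + eps) / (1 - eps)) * (be / al).
    by rewrite mulr_ge0 ?sq_ge0 // divr_ge0 // ltW.
  by rewrite ler_sqr ?nnegrE.
rewrite [X in _ <= X]exprMn (sqK q_ge0) !expr_div_n.
have smax_le : smax ^+ 2 <= be ^+ 2 / (1 - eps) by rewrite ler_pdivlMr // mulrC.
have smin_ge : (smin ^+ 2)^-1 <= (1 + eps) / al ^+ 2.
  by rewrite ler_pdivlMr ?exprn_gt0 // mulrC ler_pdivrMr ?exprn_gt0.
have smin'_ge0 : 0 <= (smin ^+ 2)^-1 by rewrite invr_ge0 exprn_ge0 // ltW.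
have -> : (1 + eps) / (1 - eps) * (be ^+ 2 / al ^+ 2)
          = be ^+ 2 / (1 - eps) * ((1 + eps) / al ^+ 2) by ring.
exact: ler_pM (exprn_ge0 2 smax_ge0) smin'_ge0 smax_le smin_ge.
Qed.

Section Sketch.
Variables (n r k : nat) (RU : 'M[K]_n) (Ur : 'M[K]_(n, r)) (Th : 'M[K]_(k, n)).
Hypothesis RU_adj : adj cj RU = RU.
Hypothesis RU_pd : forall x : 'cV[K]_n, x != 0 -> 0 < dot cj x (RU *m x).
Variable eps : K.
Hypothesis eps_range : 0 <= eps < 1.
Hypothesis eps_embedding : forall x y, inUr Ur x -> inUr Ur y ->
  `|dotU cj RU x y - dot cj (Th *m x) (Th *m y)|
    <= eps * normU cj sq RU x * normU cj sq RU y.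
Hypothesis ThUr_orthonormal : adj cj (Th *m Ur) *m (Th *m Ur) = 1%:M.

Lemma dotU_gt0 x : x != 0 -> 0 < dotU cj RU x x.
Proof. by rewrite /dotU dot_adjl RU_adj; apply: RU_pd. Qed.

Lemma dotU_ge0 x : 0 <= dotU cj RU x x.
Proof.
have [->|/dotU_gt0/ltW //] := eqVneq x 0.
by rewrite /dotU mulmx0 dot0l.
Qed.

Lemma normUK x : normU cj sq RU x ^+ 2 = dotU cj RU x x.
Proof. exact/sqK/dotU_ge0. Qed.

Lemma normU_gt0 x : x != 0 -> 0 < normU cj sq RU x.
Proof. by move/dotU_gt0/sq_gt0. Qed.

Lemma dot_ThUr (a b : 'cV[K]_r) :
  dot cj (Th *m (Ur *m a)) (Th *m (Ur *m b)) = dot cj a b.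
Proof. by rewrite !mulmxA dot_adjl mulmxA ThUr_orthonormal mul1mx. Qed.

Lemma enorm_ThUr (a : 'cV[K]_r) : enorm cj sq (Th *m (Ur *m a)) = enorm cj sq a.
Proof. by rewrite /enorm dot_ThUr. Qed.

Lemma Ur_eq0 (a : 'cV[K]_r) : (Ur *m a == 0) = (a == 0).
Proof.
apply/eqP/eqP => [Ura|->]; last exact: mulmx0.
by rewrite -[a]mul1mx -ThUr_orthonormal -!mulmxA Ura !mulmx0.
Qed.

Lemma dot_embedding_le (a : 'cV[K]_r) :
  (1 - eps) * dotU cj RU (Ur *m a) (Ur *m a) <= dot cj a a
    <= (1 + eps) * dotU cj RU (Ur *m a) (Ur *m a).
Proof.
have := eps_embedding (ex_intro _ a erefl) (ex_intro _ a erefl).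
rewrite dot_ThUr -mulrA -expr2 normUK distrC.
by rewrite real_ler_distl ?rpredB ?ger0_real ?dotxx_ge0 ?dotU_ge0 // mulrBl mulrDl mul1r.
Qed.

(* Coordinates of the Theta-orthogonal projection of R_U^-1 y onto U_r. *)
Definition sketch_coord (y : 'cV[K]_n) : 'cV[K]_r :=
  adj cj (Th *m Ur) *m (Th *m (invmx RU *m y)).

Lemma dot_sketch_coord y (a : 'cV[K]_r) :
  dot cj (Th *m (invmx RU *m y)) (Th *m (Ur *m a)) = dot cj (sketch_coord y) a.
Proof. by rewrite mulmxA dot_adjr. Qed.

Lemma dualnormTh_sketch_coord y : (0 < r)%N ->
  is_dualnormTh cj sq RU Ur Th y (enorm cj sq (sketch_coord y)).
Proof.
move=> r_gt0; set c := sketch_coord y; split.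
  have [c0|nz_c] := eqVneq c 0.
    have nz_1 : const_mx 1 != 0 :> 'cV[K]_r.
      by apply/eqP => /matrixP/(_ (Ordinal r_gt0) 0)/eqP; rewrite !mxE oner_eq0.
    exists (Ur *m const_mx 1); split; first by eexists.
    rewrite Ur_eq0 dot_sketch_coord -/c c0 dot0l normr0 mul0r.
    by split=> //; apply/eqP; rewrite enorm_eq0.
  exists (Ur *m c); split; first by eexists.
  rewrite Ur_eq0 dot_sketch_coord enorm_ThUr ger0_norm ?dotxx_ge0 //.
  by split=> //; rewrite -enormK expr2 mulfK // gt_eqF ?enorm_gt0.
move=> v [_ [[a ->] [nz_x ->]]].
rewrite dot_sketch_coord enorm_ThUr ler_pdivrMr ?enorm_gt0 -?Ur_eq0 //.
have := cauchy_schwarz c a; rewrite -!enormK -exprMn.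
by rewrite ler_sqr ?nnegrE ?mulr_ge0 ?enorm_ge0.
Qed.

Lemma dualnormTh_eq y d :
  is_dualnormTh cj sq RU Ur Th y d -> d = enorm cj sq (sketch_coord y).
Proof.
move=> Hd; apply: (is_max_unique Hd); apply: dualnormTh_sketch_coord.
have [_ [[a ->] [nz_x _]]] := Hd.1.
by apply: (@cV_neq0_dim_gt0 _ a); rewrite -Ur_eq0.
Qed.

Variables (A : 'M[K]_n) (u : 'cV[K]_n).

Lemma sketch_coord_Ar (a : 'cV[K]_r) :
  sketch_coord (A *m (Ur *m a)) = Ar cj RU Ur Th A *m a.
Proof. by rewrite /sketch_coord /Ar adjM !mulmxA. Qed.

Lemma dualnormTh_Ar (a : 'cV[K]_r) : a != 0 ->
  is_dualnormTh cj sq RU Ur Th (A *m (Ur *m a)) (enorm cj sq (Ar cj RU Ur Th A *m a)).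
Proof.
by move=> nz_a; rewrite -sketch_coord_Ar; apply/dualnormTh_sketch_coord/(cV_neq0_dim_gt0 nz_a).
Qed.

Lemma alphaTh_ge0 al : is_alphaTh cj sq RU Ur Th A al -> 0 <= al.
Proof.
case=> [[x [_ [nz_x [d [Hd ->]]]]] _].
by rewrite (dualnormTh_eq Hd) divr_ge0 ?enorm_ge0 // ltW ?normU_gt0.
Qed.

Lemma betaTh_ge0 be : is_betaTh cj sq RU Ur Th A u be -> 0 <= be.
Proof.
case=> [[c [x [_ [nz_x [d [Hd ->]]]]]] _].
by rewrite (dualnormTh_eq Hd) divr_ge0 ?enorm_ge0 // ltW ?normU_gt0.
Qed.

Lemma alphaTh_sq_le al s : is_alphaTh cj sq RU Ur Th A al ->
  singval cj (Ar cj RU Ur Th A) s -> al ^+ 2 <= (1 + eps) * s ^+ 2.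
Proof.
move=> Hal Hs; have [w Aw nz_w] := singval_vec Hs.
have nz_Urw : Ur *m w != 0 by rewrite Ur_eq0.
have normU_ge0 := ltW (normU_gt0 nz_Urw).
have al_le : al * normU cj sq RU (Ur *m w) <= enorm cj sq (Ar cj RU Ur Th A *m w).
  rewrite -ler_pdivlMr ?(normU_gt0 nz_Urw) //; apply: Hal.2; exists (Ur *m w).
  split; first by eexists.
  by split=> //; eexists; split; first exact: dualnormTh_Ar.
have al_sq_le : al ^+ 2 * dotU cj RU (Ur *m w) (Ur *m w) <= s ^+ 2 * dot cj w w.
  rewrite -normUK -exprMn -Aw -enormK ler_sqr // nnegrE ?enorm_ge0 //.
  by rewrite mulr_ge0 ?(alphaTh_ge0 Hal).
rewrite -(ler_pM2r (dotU_gt0 nz_Urw)); apply: le_trans al_sq_le _.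
rewrite [X in _ <= X]mulrAC [X in _ <= X]mulrC.
apply: ler_wpM2l; first exact: exprn_ge0 Hs.1.
by case/andP: (dot_embedding_le w).
Qed.

Lemma betaTh_sq_ge be s : is_betaTh cj sq RU Ur Th A u be ->
  singval cj (Ar cj RU Ur Th A) s -> (1 - eps) * s ^+ 2 <= be ^+ 2.
Proof.
move=> Hbe Hs; have [w Aw nz_w] := singval_vec Hs.
have nz_Urw : Ur *m w != 0 by rewrite Ur_eq0.
have normU_ge0 := ltW (normU_gt0 nz_Urw).
have be_ge : enorm cj sq (Ar cj RU Ur Th A *m w) <= be * normU cj sq RU (Ur *m w).
  rewrite -ler_pdivrMr ?(normU_gt0 nz_Urw) //; apply: Hbe.2; exists 0, (Ur *m w).
  rewrite scale0r add0r; split; first by eexists.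
  by split=> //; eexists; split; first exact: dualnormTh_Ar.
have be_sq_ge : s ^+ 2 * dot cj w w <= be ^+ 2 * dotU cj RU (Ur *m w) (Ur *m w).
  rewrite -normUK -exprMn -Aw -enormK ler_sqr // nnegrE ?enorm_ge0 //.
  by rewrite mulr_ge0 ?(betaTh_ge0 Hbe).
rewrite -(ler_pM2r (dotU_gt0 nz_Urw)); apply: le_trans _ be_sq_ge.
rewrite mulrAC mulrC.
apply: ler_wpM2l; first exact: exprn_ge0 Hs.1.
by case/andP: (dot_embedding_le w).
Qed.

Lemma alphaTh0_singval0 : is_alphaTh cj sq RU Ur Th A 0 ->
  singval cj (Ar cj RU Ur Th A) 0.
Proof.
case=> [[_ [[a ->] [nz_Ura [d [Hd d0]]]]] _]; move/esym/eqP: d0.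
rewrite mulf_eq0 invr_eq0 (gt_eqF (normU_gt0 nz_Ura)) orbF (dualnormTh_eq Hd).
rewrite sketch_coord_Ar enorm_eq0 => /eqP Aa.
by apply: (singval0 Aa); rewrite -Ur_eq0.
Qed.

Lemma cond_Ar_le al be kappa :
  is_alphaTh cj sq RU Ur Th A al -> is_betaTh cj sq RU Ur Th A u be ->
  is_cond cj (Ar cj RU Ur Th A) kappa ->
  kappa <= sq ((1 + eps) / (1 - eps)) * (be / al).
Proof.
move=> Hal Hbe [smax [smin [[smax_sv _] [[smin_sv smin_le] ->]]]].
have [smin0|nz_smin] := eqVneq smin 0.
  (* then kappa = smax / 0 = 0 *)
  rewrite smin0 invr0 mulr0 mulr_ge0 ?divr_ge0 ?(alphaTh_ge0 Hal) ?(betaTh_ge0 Hbe) //.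
  apply/sq_ge0/divr_ge0; case/andP: eps_range => eps_ge0 eps_lt1.
    exact: addr_ge0.
  by rewrite subr_ge0 ltW.
have smin_gt0 : 0 < smin by rewrite lt_def nz_smin smin_sv.1.
have al_gt0 : 0 < al.
  rewrite lt_def (alphaTh_ge0 Hal) andbT; apply: contraTneq smin_gt0 => al0.
  by move: Hal; rewrite al0 => /alphaTh0_singval0/smin_le/le_gtF ->.
apply: ratio_le_of_sq_bounds; rewrite ?(betaTh_ge0 Hbe) ?smax_sv.1 //.
  exact: alphaTh_sq_le.
exact: betaTh_sq_ge.
Qed.

End Sketch.

Lemma prop43_general : prop43_stmt cj sq.
Proof.
move=> n r k RU A u Ur Th eps RU_adj RU_pd _ eps_range eps_embedding orth al be kappa.
exact: (cond_Ar_le RU_adj RU_pd eps_range eps_embedding orth).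
Qed.

End Norms.
End Hermitian.

Theorem proposition4p3 :
  (forall R : rcfType, prop43_stmt (fun x : R => x) Num.sqrt) /\
  (forall C : numClosedFieldType, prop43_stmt (fun z : C => z^*) sqrtC).
Proof.
split=> [R | C].
  apply: (@prop43_general _ (idfun : {rmorphism R -> R}) _ _ Num.sqrt).
  - by [].
  - by move=> x; rewrite real_normK ?num_real // expr2.
  - by move=> x _; apply: sqrtr_ge0.
  - by move=> x; apply: sqr_sqrtr.
apply: (@prop43_general _ (Num.conj : {rmorphism C -> C}) _ _ sqrtC).
- exact: conjCK.
- by move=> x; rewrite normCKC.
- by move=> x; rewrite sqrtC_ge0.
- by move=> x _; apply: sqrtCK.
Qed.
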